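(* Let $ABCD$ be a convex quadrilateral in which no two opposite sides are parallel. If $I_1=I_2$, then $ABCD$ is tangential or cyclic (possibly both, i.e. bicentric).
   Context: Let $E$ be the intersection point of lines $AB$ and $DC$, and $F$ the intersection point of lines $AD$ and $BC$. Let $M,N$ be the midpoints of the diagonals $AC$ and $BD$; the line $MN$ is the Newton line. $I_1$ is the intersection point of the bisector line of the angle $\angle AED$ (the angle at $E$ between rays $EA$ and $ED$) with the line $MN$, and $I_2$ is the intersection point of the bisector line of the angle $\angle AFB$ (the angle at $F$ between rays $FA$ and $FB$) with the line $MN$. A quadrilateral is tangential if it has a circle tangent to all four sides. *)

From Stdlib Require Import Reals Lra.
Open Scope R_scope.

Definition point := (R * R)%type.

Definition px (P : point) : R := fst P.
Definition py (P : point) : R := snd P.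

Definition cross (P Q R0 S : point) : R :=
  (px Q - px P) * (py S - py R0) - (py Q - py P) * (px S - px R0).

(* Q lies on the line through P1 and P2 (P1 <> P2 assumed where used) *)
Definition on_line (P1 P2 Q : point) : Prop := cross P1 P2 P1 Q = 0.

Definition dist2 (P Q : point) : R :=
  (px P - px Q) ^ 2 + (py P - py Q) ^ 2.

Definition dist (P Q : point) : R := sqrt (dist2 P Q).

Definition midpoint (P Q : point) : point :=
  ((px P + px Q) / 2, (py P + py Q) / 2).

Definition convex_quad (A B C D : point) : Prop :=
  (0 < cross A B B C /\ 0 < cross B C C D /\ 0 < cross C D D A /\ 0 < cross D A A B)
  \/
  (cross A B B C < 0 /\ cross B C C D < 0 /\ cross C D D A < 0 /\ cross D A A B < 0).

Definition on_angle_bisector (P1 V P2 Q : point) : Prop :=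
  exists t : R,
    px Q = px V + t * ((px P1 - px V) / dist V P1 + (px P2 - px V) / dist V P2) /\
    py Q = py V + t * ((py P1 - py V) / dist V P1 + (py P2 - py V) / dist V P2).

Definition tangent_to_segment (O : point) (r : R) (P Q : point) : Prop :=
  exists T : point, exists s : R,
    0 <= s <= 1 /\
    px T = px P + s * (px Q - px P) /\ py T = py P + s * (py Q - py P) /\
    dist O T = r /\
    (px O - px T) * (px Q - px P) + (py O - py T) * (py Q - py P) = 0.

Definition tangential (A B C D : point) : Prop :=
  exists (O : point) (r : R), 0 < r /\
    tangent_to_segment O r A B /\ tangent_to_segment O r B C /\
    tangent_to_segment O r C D /\ tangent_to_segment O r D A.

Definition cyclic (A B C D : point) : Prop :=
  exists (O : point) (r : R), 0 < r /\
    dist O A = r /\ dist O B = r /\ dist O C = r /\ dist O D = r.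

(* Signed distances to the four side lines (positive inside the quadrilateral,
   up to a global orientation sign) carry the whole argument.  A point I on the
   bisector of angle AED is at the same distance u from AB and CD; on the
   bisector of angle AFB it is at the same distance v from BC and DA.  The
   Newton line is the zero set of the affine function
   |AB| d_AB + |CD| d_CD - |BC| d_BC - |DA| d_DA  (Anne's theorem), and this
   function equals  sum over the vertices of cot(angle) times the difference
   of the squared distances to the two sides through that vertex.  At I this
   is (u^2 - v^2) (cot A + cot B + cot C + cot D) = 0.  A vanishing cotangent
   sum means, when no opposite sides are parallel, that the vertices are
   concyclic; otherwise u^2 = v^2, and the Newton relation
   (|AB| + |CD|) u = (|BC| + |DA|) v rules out u = -v unless u = v = 0.  So I
   is equidistant from all four sides and, the corners being convex, the feet
   of the perpendiculars lie on the sides: the circle about I of radius |u| is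
   inscribed. *)

From Pilot Require Import Defs.
From Stdlib Require Import Reals Lra Psatz.
(* Imported again so that [dist] denotes [Defs.dist], not the one from Reals. *)
From Pilot Require Import Defs.
Open Scope R_scope.

Definition dot (P Q R0 S : point) : R :=
  (px Q - px P) * (px S - px R0) + (py Q - py P) * (py S - py R0).

Definition lerp (P Q : point) (s : R) : point :=
  (px P + s * (px Q - px P), py P + s * (py Q - py P)).

Definition sdist (P Q X : point) : R := cross P Q P X / dist P Q.

Ltac expand_points :=
  repeat match goal with P : point |- _ => destruct P end;
  unfold lerp, midpoint, dot, cross, dist2, px, py in *; cbn [fst snd] in *.

Lemma cross_rev (P Q X : point) : cross P Q P X = - cross Q P Q X.
Proof. expand_points; ring. Qed.

Lemma cross_antisym (P Q R0 S : point) : cross P Q R0 S = - cross R0 S P Q.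
Proof. expand_points; ring. Qed.

Lemma cross_chasles (P Q A E X : point) : cross P Q A X = cross P Q A E + cross P Q E X.
Proof. expand_points; ring. Qed.

Lemma cross_lerp (P Q A B : point) (l : R) : cross P Q (lerp A B l) A = - l * cross P Q A B.
Proof. expand_points; ring. Qed.

Lemma dist_sym (P Q : point) : dist P Q = dist Q P.
Proof. unfold dist; f_equal; expand_points; ring. Qed.

Lemma dist2_ge0 (P Q : point) : 0 <= dist2 P Q.
Proof. expand_points; apply Rplus_le_le_0_compat; apply pow2_ge_0. Qed.

Lemma dist_sqr (P Q : point) : dist P Q ^ 2 = dist2 P Q.
Proof. unfold dist; rewrite pow2_sqrt; [reflexivity | apply dist2_ge0]. Qed.

Lemma dist2_eq0 (P Q : point) : dist2 P Q = 0 -> P = Q.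
Proof.
  destruct P as [x1 y1], Q as [x2 y2]; unfold dist2, px, py; cbn [fst snd]; intro H.
  pose proof (pow2_ge_0 (x1 - x2)); pose proof (pow2_ge_0 (y1 - y2)).
  f_equal; nra.
Qed.

Lemma dist_pos_of_cross (P Q R0 S : point) : cross P Q R0 S <> 0 -> 0 < dist P Q.
Proof.
  intro H; unfold dist; apply sqrt_lt_R0.
  destruct (Rle_lt_or_eq _ _ (dist2_ge0 P Q)) as [Hlt | Heq]; [exact Hlt |].
  symmetry in Heq; apply dist2_eq0 in Heq; subst Q; exfalso; apply H; expand_points; ring.
Qed.

Lemma dist_lerp (A B : point) (l : R) : dist (lerp A B l) A = Rabs l * dist A B.
Proof.
  unfold dist; rewrite <- sqrt_Rsqr_abs, <- sqrt_mult by (apply Rle_0_sqr || apply dist2_ge0).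
  f_equal; unfold Rsqr; expand_points; ring.
Qed.

Lemma sdist_swap (P Q X : point) : sdist P Q X = - sdist Q P X.
Proof. unfold sdist; rewrite cross_rev, dist_sym; unfold Rdiv; ring. Qed.

Lemma cross_eq_dist_mul_sdist (P Q X : point) :
  0 < dist P Q -> cross P Q P X = dist P Q * sdist P Q X.
Proof. intro H; unfold sdist; field; lra. Qed.

Lemma sdist_sqr (P Q X : point) :
  0 < dist P Q -> sdist P Q X ^ 2 = cross P Q P X ^ 2 / dist2 P Q.
Proof. intro H; unfold sdist; rewrite <- dist_sqr; field; lra. Qed.

Lemma lagrange_identity (P Q X : point) :
  dot P Q P X ^ 2 + cross P Q P X ^ 2 = dist2 P Q * dist2 P X.
Proof. expand_points; ring. Qed.

Lemma Rabs_dot_le (P Q X : point) : Rabs (dot P Q P X) <= dist P Q * dist P X.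
Proof.
  rewrite <- (Rabs_pos_eq (dist P Q * dist P X))
    by (apply Rmult_le_pos; apply sqrt_pos).
  apply Rsqr_le_abs_0; unfold Rsqr.
  replace (dist P Q * dist P X * (dist P Q * dist P X)) with (dist P Q ^ 2 * dist P X ^ 2) by ring.
  rewrite !dist_sqr, <- lagrange_identity.
  pose proof (pow2_ge_0 (cross P Q P X)); nra.
Qed.

Lemma on_line_lerp (A B E : point) :
  0 < dist A B -> on_line A B E -> exists l, E = lerp A B l.
Proof.
  unfold on_line; intros H HE; exists (dot A B A E / dist2 A B).
  assert (Hd : dist2 A B <> 0) by (intro Hz; unfold dist in H; rewrite Hz, sqrt_0 in H; lra).
  destruct A as [xa ya], B as [xb yb], E as [xe ye].
  unfold lerp, dot, cross, dist2, px, py in *; cbn [fst snd] in *.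
  set (d2 := (xa - xb) ^ 2 + (ya - yb) ^ 2) in *.
  set (c := (xb - xa) * (ye - ya) - (yb - ya) * (xe - xa)) in HE.
  set (p := (xb - xa) * (xe - xa) + (yb - ya) * (ye - ya)).
  f_equal; apply (Rmult_eq_reg_r d2); try exact Hd.
  - transitivity (xa * d2 + p * (xb - xa) - (yb - ya) * c); [unfold d2, p, c; ring |].
    rewrite HE; field; exact Hd.
  - transitivity (ya * d2 + p * (yb - ya) + (xb - xa) * c); [unfold d2, p, c; ring |].
    rewrite HE; field; exact Hd.
Qed.

Lemma div_Rabs_eq_of_mul_pos (l m : R) : 0 < l * m -> l / Rabs l = m / Rabs m.
Proof.
  intro H; destruct (Rtotal_order l 0) as [Hl | [Hl | Hl]].
  - assert (m < 0) by nra; rewrite !Rabs_left by lra; field; lra.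
  - subst l; lra.
  - assert (0 < m) by nra; rewrite !Rabs_pos_eq by lra; field; lra.
Qed.

Lemma on_angle_bisector_cross (P1 V P2 I : point) :
  on_angle_bisector P1 V P2 I -> exists t, forall Q R0,
    cross Q R0 V I = t * (cross Q R0 V P1 / dist V P1 + cross Q R0 V P2 / dist V P2).
Proof.
  intros [t [Hx Hy]]; exists t; intros Q R0.
  unfold cross; rewrite Hx, Hy; unfold Rdiv; ring.
Qed.

Lemma sdist_eq_of_on_angle_bisector (A B C D E I : point) :
  0 < cross A B A D * cross D A D C -> cross A B D C <> 0 ->
  on_line A B E -> on_line D C E -> on_angle_bisector A E D I ->
  sdist A B I = sdist C D I.
Proof.
  unfold on_line; intros Hturn HX HAB HDC Hbis.
  assert (Ha := dist_pos_of_cross _ _ _ _ HX).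
  assert (Hc : 0 < dist D C).
  { apply (dist_pos_of_cross D C A B); rewrite cross_antisym; lra. }
  destruct (on_line_lerp A B E Ha HAB) as [l Hl].
  destruct (on_line_lerp D C E Hc HDC) as [m Hm].
  assert (HEA : cross D C E A = l * cross A B D C).
  { rewrite Hl, cross_lerp, (cross_antisym D C A B); expand_points; ring. }
  assert (HED : cross A B E D = - m * cross A B D C).
  { rewrite Hm, cross_lerp; reflexivity. }
  (* Equal turns at A and D put E beyond A and D, or beyond B and C. *)
  assert (Hlm : 0 < l * m).
  { assert (cross A B A D = - m * cross A B D C)
      by (rewrite (cross_chasles A B A E D), HAB, HED; ring).
    assert (cross D A D C = - l * cross A B D C)
      by (rewrite (cross_antisym D A D C), (cross_chasles D C D E A), HDC, HEA; ring).
    assert (0 < cross A B D C * cross A B D C) by (apply Rsqr_pos_lt; exact HX).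
    nra. }
  destruct (on_angle_bisector_cross _ _ _ _ Hbis) as [t Ht].
  rewrite (sdist_swap C D I); unfold sdist.
  rewrite (cross_chasles A B A E I), HAB, Rplus_0_l, Ht.
  rewrite (cross_chasles D C D E I), HDC, Rplus_0_l, Ht.
  rewrite HEA, HED.
  replace (cross A B E A) with 0 by (rewrite Hl, cross_lerp; expand_points; ring).
  replace (cross D C E D) with 0 by (rewrite Hm, cross_lerp; expand_points; ring).
  assert (HdA : dist E A = Rabs l * dist A B) by (rewrite Hl; apply dist_lerp).
  assert (HdD : dist E D = Rabs m * dist D C) by (rewrite Hm; apply dist_lerp).
  assert (Hl0 : Rabs l <> 0) by (apply Rabs_no_R0; intro; subst l; lra).
  assert (Hm0 : Rabs m <> 0) by (apply Rabs_no_R0; intro; subst m; lra).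
  rewrite HdA, HdD.
  transitivity (- t * cross A B D C * (m / Rabs m) / (dist A B * dist D C)).
  - field; repeat split; lra.
  - rewrite <- (div_Rabs_eq_of_mul_pos l m Hlm); field; repeat split; lra.
Qed.

Lemma dot_ge0_of_equal_sdist (P Q R0 O : point) (u : R) :
  sdist P Q O = u -> sdist R0 P O = u -> 0 < u * cross P Q P R0 -> 0 <= dot P Q P O.
Proof.
  intros HPQ HRP Hturn.
  assert (Hn : cross P Q P R0 <> 0) by (intro Hz; rewrite Hz in Hturn; lra).
  assert (Ha := dist_pos_of_cross _ _ _ _ Hn).
  assert (Hd : 0 < dist R0 P).
  { rewrite dist_sym; apply (dist_pos_of_cross P R0 P Q); rewrite cross_antisym; lra. }
  assert (Hcs : - dot P Q P R0 <= dist P Q * dist R0 P).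
  { rewrite (dist_sym R0 P); eapply Rle_trans; [| apply Rabs_dot_le].
    rewrite <- Rabs_Ropp; apply Rle_abs. }
  assert (Hid : dot P Q P O * cross P Q P R0
                = dist2 P Q * cross R0 P R0 O + cross P Q P O * dot P Q P R0)
    by (expand_points; ring).
  rewrite <- dist_sqr, (cross_eq_dist_mul_sdist R0 P O), (cross_eq_dist_mul_sdist P Q O),
    HPQ, HRP in Hid by assumption.
  assert (Hprod : dot P Q P O * (u * cross P Q P R0)
                  = dist P Q * (u * u) * (dist P Q * dist R0 P + dot P Q P R0)).
  { transitivity (u * (dot P Q P O * cross P Q P R0)); [ring | rewrite Hid; ring]. }
  assert (0 <= dist P Q * (u * u) * (dist P Q * dist R0 P + dot P Q P R0)).
  { apply Rmult_le_pos; [apply Rmult_le_pos; [lra | apply Rle_0_sqr] | lra]. }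
  nra.
Qed.

Lemma tangent_to_segment_of_foot (O P Q : point) :
  0 < dist P Q -> 0 <= dot P Q P O -> 0 <= dot Q P Q O ->
  tangent_to_segment O (Rabs (sdist P Q O)) P Q.
Proof.
  intros Ha H0 H1.
  assert (Hd : 0 < dist2 P Q) by (rewrite <- dist_sqr; nra).
  assert (Hsum : dot P Q P O + dot Q P Q O = dist2 P Q) by (expand_points; ring).
  set (s := dot P Q P O / dist2 P Q).
  exists (lerp P Q s), s; repeat split.
  - apply Rmult_le_pos; [lra | left; apply Rinv_0_lt_compat; lra].
  - apply (Rmult_le_reg_r (dist2 P Q)); [lra |].
    unfold s, Rdiv; rewrite Rmult_assoc, Rinv_l, Rmult_1_r by lra; lra.
  - unfold dist; rewrite <- sqrt_Rsqr_abs, Rsqr_pow2, sdist_sqr by exact Ha; f_equal.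
    unfold s; expand_points; field; lra.
  - unfold s; expand_points; field; lra.
Qed.

Lemma tangent_to_segment_of_equal_sdist (P Q R0 S O : point) (u : R) :
  sdist R0 P O = u -> sdist P Q O = u -> sdist Q S O = u ->
  0 < u * cross P Q P R0 -> 0 < u * cross Q S Q P ->
  tangent_to_segment O (Rabs u) P Q.
Proof.
  intros HRP HPQ HQS HP HQ.
  assert (HQn : cross Q S Q P <> 0) by (intro Hz; rewrite Hz in HQ; lra).
  assert (Ha : 0 < dist P Q).
  { rewrite dist_sym; apply (dist_pos_of_cross Q P Q S); rewrite cross_antisym; lra. }
  rewrite <- HPQ; apply tangent_to_segment_of_foot; [exact Ha | |].
  - exact (dot_ge0_of_equal_sdist P Q R0 O u HPQ HRP HP).
  - apply (dot_ge0_of_equal_sdist Q P S O (- u)).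
    + rewrite sdist_swap, HPQ; reflexivity.
    + rewrite sdist_swap, HQS; reflexivity.
    + rewrite cross_antisym; lra.
Qed.

Lemma convex_quad_corners (A B C D : point) : convex_quad A B C D ->
  (0 < cross A B A D /\ 0 < cross B C B A /\ 0 < cross C D C B /\ 0 < cross D A D C) \/
  (cross A B A D < 0 /\ cross B C B A < 0 /\ cross C D C B < 0 /\ cross D A D C < 0).
Proof.
  unfold convex_quad.
  replace (cross A B A D) with (cross D A A B) by (expand_points; ring).
  replace (cross B C B A) with (cross A B B C) by (expand_points; ring).
  replace (cross C D C B) with (cross B C C D) by (expand_points; ring).
  replace (cross D A D C) with (cross C D D A) by (expand_points; ring).
  tauto.
Qed.

Lemma convex_quad_corners_neq0 (A B C D : point) : convex_quad A B C D ->
  cross A B A D <> 0 /\ cross B C B A <> 0 /\ cross C D C B <> 0 /\ cross D A D C <> 0.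
Proof.
  intro Hconv; assert (Hcorners := convex_quad_corners _ _ _ _ Hconv).
  repeat split; intro Hz; rewrite Hz in Hcorners; lra.
Qed.

Lemma convex_quad_dist_pos (A B C D : point) : convex_quad A B C D ->
  0 < dist A B /\ 0 < dist B C /\ 0 < dist C D /\ 0 < dist D A.
Proof.
  intro Hconv; assert (Hcorners := convex_quad_corners _ _ _ _ Hconv).
  repeat split; eapply dist_pos_of_cross; intro Hz; rewrite Hz in Hcorners; lra.
Qed.

Lemma cross_sides_sum (A B C D X : point) :
  cross A B A X + cross B C B X + cross C D C X + cross D A D X =
  cross A B A D + cross C D C B.
Proof. expand_points; ring. Qed.

Lemma tangential_of_equal_sdist (A B C D I : point) (u : R) :
  convex_quad A B C D ->
  sdist A B I = u -> sdist B C I = u -> sdist C D I = u -> sdist D A I = u ->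
  tangential A B C D.
Proof.
  intros Hconv HAB HBC HCD HDA.
  assert (Hcorners := convex_quad_corners _ _ _ _ Hconv).
  assert (Hpos := convex_quad_dist_pos _ _ _ _ Hconv).
  assert (Hu : (dist A B + dist B C + dist C D + dist D A) * u = cross A B A D + cross C D C B).
  { rewrite <- (cross_sides_sum A B C D I), !cross_eq_dist_mul_sdist, HAB, HBC, HCD, HDA
      by tauto; ring. }
  assert (Hturns : 0 < u * cross A B A D /\ 0 < u * cross B C B A /\
                   0 < u * cross C D C B /\ 0 < u * cross D A D C).
  { destruct Hcorners as [Hc | Hc].
    - assert (0 < u) by nra; repeat split; nra.
    - assert (u < 0) by nra; repeat split; nra. }
  destruct Hturns as (HA & HB & HC & HD).
  exists I, (Rabs u); split; [apply Rabs_pos_lt; intro Hu0; rewrite Hu0 in HA; lra |].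
  repeat split; eapply tangent_to_segment_of_equal_sdist; eassumption.
Qed.

Definition det3 (a b c d e f g h i : R) : R :=
  a * (e * i - f * h) - b * (d * i - f * g) + c * (d * h - e * g).

(* Vanishes exactly when D lies on the circle (or line) through A, B, C. *)
Definition cocircular_det (A B C D : point) : R :=
  det3 (px B - px A) (py B - py A) (dist2 B A)
       (px C - px A) (py C - py A) (dist2 C A)
       (px D - px A) (py D - py A) (dist2 D A).

Definition circumcenter (A B C : point) : point :=
  let k := 2 * cross A B A C in
  (px A + (dist2 B A * (py C - py A) - dist2 C A * (py B - py A)) / k,
   py A + (dist2 C A * (px B - px A) - dist2 B A * (px C - px A)) / k).

Lemma dist2_circumcenter (A B C X : point) : cross A B A C <> 0 ->
  dist2 (circumcenter A B C) X
  = dist2 (circumcenter A B C) A + cocircular_det A B C X / cross A B A C.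
Proof.
  unfold circumcenter, cocircular_det, det3; intro H; expand_points; field; exact H.
Qed.

Lemma cyclic_of_cocircular_det (A B C D : point) :
  cross A B A C <> 0 -> cocircular_det A B C D = 0 -> cyclic A B C D.
Proof.
  intros HABC HD; set (O := circumcenter A B C).
  assert (Heq : forall X, cocircular_det A B C X = 0 -> dist2 O X = dist2 O A).
  { intros X HX; unfold O; rewrite dist2_circumcenter, HX by exact HABC; field; exact HABC. }
  assert (HB : dist2 O B = dist2 O A) by (apply Heq; unfold cocircular_det, det3; ring).
  assert (HC : dist2 O C = dist2 O A) by (apply Heq; unfold cocircular_det, det3; ring).
  exists O, (dist O A); unfold dist; rewrite HB, HC, (Heq D HD); repeat split.
  apply sqrt_lt_R0; destruct (Rle_lt_or_eq _ _ (dist2_ge0 O A)) as [Hlt | Hz]; [exact Hlt |].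
  assert (HOA := dist2_eq0 O A (eq_sym Hz)); rewrite <- Hz in HB.
  assert (HOB := dist2_eq0 O B HB).
  exfalso; apply HABC; rewrite <- HOB, HOA; unfold cross; ring.
Qed.

Definition cot_angle (V P Q : point) : R := dot V P V Q / cross V P V Q.

Lemma cot_sum_mul (A B C D : point) :
  cross A B A D <> 0 -> cross B C B A <> 0 -> cross C D C B <> 0 -> cross D A D C <> 0 ->
  (cot_angle A B D + cot_angle B C A + cot_angle C D B + cot_angle D A C)
    * (cross A B A D * cross B C B A * cross C D C B * cross D A D C)
  = cocircular_det A B C D * cross A B D C * cross A D B C.
Proof.
  unfold cot_angle, cocircular_det, det3; intros; expand_points; field; tauto.
Qed.

Lemma cyclic_of_cot_sum (A B C D : point) :
  cross A B A D <> 0 -> cross B C B A <> 0 -> cross C D C B <> 0 -> cross D A D C <> 0 ->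
  cross A B D C <> 0 -> cross A D B C <> 0 ->
  cot_angle A B D + cot_angle B C A + cot_angle C D B + cot_angle D A C = 0 ->
  cyclic A B C D.
Proof.
  intros HA HB HC HD HX HY Hsum.
  assert (Hdet := cot_sum_mul A B C D HA HB HC HD).
  rewrite Hsum, Rmult_0_l in Hdet.
  apply cyclic_of_cocircular_det.
  - replace (cross A B A C) with (cross B C B A) by (expand_points; ring); exact HB.
  - destruct (Rmult_integral _ _ (eq_sym Hdet)) as [Hdet' | ]; [| contradiction].
    destruct (Rmult_integral _ _ Hdet'); [assumption | contradiction].
Qed.

Lemma cross_on_newton_line (A B C D P : point) :
  on_line (midpoint A C) (midpoint B D) P ->
  cross A B A P + cross C D C P - cross B C B P - cross D A D P = 0.
Proof.
  unfold on_line; intro HP.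
  transitivity (4 * cross (midpoint A C) (midpoint B D) (midpoint A C) P).
  - expand_points; field.
  - rewrite HP; ring.
Qed.

(* The quadratic terms on the right-hand side cancel. *)
Lemma newton_cot_identity (A B C D P : point) :
  cross A B A D <> 0 -> cross B C B A <> 0 -> cross C D C B <> 0 -> cross D A D C <> 0 ->
  cross A B A P + cross C D C P - cross B C B P - cross D A D P =
    cot_angle A B D * (sdist A B P ^ 2 - sdist D A P ^ 2)
  + cot_angle B C A * (sdist A B P ^ 2 - sdist B C P ^ 2)
  + cot_angle C D B * (sdist C D P ^ 2 - sdist B C P ^ 2)
  + cot_angle D A C * (sdist C D P ^ 2 - sdist D A P ^ 2).
Proof.
  intros HA HB HC HD.
  assert (Hab := dist_pos_of_cross _ _ _ _ HA); assert (Hbc := dist_pos_of_cross _ _ _ _ HB).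
  assert (Hcd := dist_pos_of_cross _ _ _ _ HC); assert (Hda := dist_pos_of_cross _ _ _ _ HD).
  rewrite !sdist_sqr by assumption.
  assert (dist2 A B <> 0) by (rewrite <- dist_sqr; apply pow_nonzero; lra).
  assert (dist2 B C <> 0) by (rewrite <- dist_sqr; apply pow_nonzero; lra).
  assert (dist2 C D <> 0) by (rewrite <- dist_sqr; apply pow_nonzero; lra).
  assert (dist2 D A <> 0) by (rewrite <- dist_sqr; apply pow_nonzero; lra).
  clear Hab Hbc Hcd Hda; unfold cot_angle; expand_points; field; tauto.
Qed.

Lemma eq_of_sqr_eq_of_mul_eq (p q u v : R) :
  0 < p -> 0 < q -> p * u = q * v -> u ^ 2 = v ^ 2 -> u = v.
Proof.
  intros Hp Hq Hpq Hsq.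
  assert (Hfac : (u - v) * (u + v) = 0)
    by (replace ((u - v) * (u + v)) with (u ^ 2 - v ^ 2) by ring; lra).
  destruct (Rmult_integral _ _ Hfac) as [Hmin | Hplus]; [lra |].
  assert (Hu : (p + q) * u = 0) by (replace v with (- u) in Hpq by lra; lra).
  destruct (Rmult_integral _ _ Hu); lra.
Qed.

Theorem theorem8 (A B C D E F I : point) :
  convex_quad A B C D ->
  cross A B D C <> 0 -> cross A D B C <> 0 ->
  on_line A B E -> on_line D C E ->
  on_line A D F -> on_line B C F ->
  let M := midpoint A C in
  let N := midpoint B D in
  on_angle_bisector A E D I -> on_line M N I ->
  (forall P, on_angle_bisector A E D P -> on_line M N P -> P = I) ->
  on_angle_bisector A F B I ->
  (forall P, on_angle_bisector A F B P -> on_line M N P -> P = I) ->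
  tangential A B C D \/ cyclic A B C D.
Proof.
  intros Hconv HX HY HAB HDC HAD HBC M N HbisE HMN _ HbisF _.
  assert (Hcorners := convex_quad_corners _ _ _ _ Hconv).
  destruct (convex_quad_corners_neq0 _ _ _ _ Hconv) as (HA & HB & HC & HD).
  destruct (convex_quad_dist_pos _ _ _ _ Hconv) as (Hab & Hbc & Hcd & Hda).
  assert (HE : sdist A B I = sdist C D I).
  { apply (sdist_eq_of_on_angle_bisector A B C D E I); auto; nra. }
  assert (HF : sdist D A I = sdist B C I).
  { assert (H : sdist A D I = sdist C B I).
    { apply (sdist_eq_of_on_angle_bisector A D C B F I); auto.
      rewrite (cross_antisym A D A B), (cross_antisym B A B C); nra. }
    rewrite (sdist_swap A D), (sdist_swap C B) in H; lra. }
  assert (Hnewton := cross_on_newton_line A B C D I HMN).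
  destruct (Rmult_integral (sdist A B I ^ 2 - sdist B C I ^ 2)
              (cot_angle A B D + cot_angle B C A + cot_angle C D B + cot_angle D A C))
    as [Hsq | Hcot].
  { rewrite <- Hnewton, newton_cot_identity, <- HE, HF by assumption; ring. }
  - assert (Huv : sdist A B I = sdist B C I).
    { apply (eq_of_sqr_eq_of_mul_eq (dist A B + dist C D) (dist B C + dist D A)); try lra.
      rewrite !cross_eq_dist_mul_sdist, <- HE, HF in Hnewton by assumption; lra. }
    left; apply (tangential_of_equal_sdist A B C D I (sdist A B I)); congruence.
  - right; apply cyclic_of_cot_sum; assumption.
Qed.
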